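(* Let $(X,d,f)$ be a dynamical system and $\mathcal{A}=\{\mathcal{U}_n\}_{n\in\mathbb{N}}$ a tame defining sequence of $(X,d)$. (i) If $f$ has the shadowing property, then $f$ has the finite shadowing property and the inverse system $(\hookrightarrow,\mathcal{PO}(\mathcal{U}_n))$ satisfies the Mittag-Leffler Condition. (ii) Suppose in addition that $\mathcal{A}$ is complete and $f$ is uniformly continuous. If $f$ has the finite shadowing property and $(\hookrightarrow,\mathcal{PO}(\mathcal{U}_n))$ satisfies the Mittag-Leffler Condition, then $f$ has the shadowing property.
   Context: Spaces are nonempty separable metrizable; a dynamical system $(X,d,f)$ has admissible metric $d$ and continuous $f:X\to X$. A partition is a cover by pairwise disjoint nonempty clopen sets. A defining sequence is a sequence of partitions $\{\mathcal{U}_n\}$, each refining the previous, whose union is a basis; complete if nested sequences $U_n\in\mathcal{U}_n$ have nonempty intersection; tame if $\sup\{\operatorname{diam}O:O\in\mathcal{U}_n\}\to0$ and each $\mathcal{U}_n$ is $\rho_n$-separated for some $\rho_n>0$ (points of distinct elements are at distance $\ge\rho_n$). Shadowing notions: a $\delta$-pseudo-orbit is a finite or infinite sequence $(x_n)$ with $d(f(x_n),x_{n+1})<\delta$; it is $\varepsilon$-shadowed by $x$ if $d(f^n(x),x_n)<\varepsilon$ for all indices. Finite shadowing property: $\forall\varepsilon\,\exists\delta$ every finite $\delta$-pseudo-orbit is $\varepsilon$-shadowed; shadowing property: same for infinite ones. $\mathcal{PO}(\mathcal{U})=\{(O_i)_{i\in\mathbb{N}}\in\mathcal{U}^{\mathbb{N}}: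 f(O_i)\cap O_{i+1}\ne\emptyset\ \forall i\}$. The map $\hookrightarrow:\mathcal{PO}(\mathcal{U}_{n+1})\to\mathcal{PO}(\mathcal{U}_n)$ sends $(O_i)$ to the unique $(V_i)\in\mathcal{U}_n^{\mathbb{N}}$ with $O_i\subseteq V_i$. An inverse system $(g_m,X_m)$, $g_m:X_{m+1}\to X_m$, satisfies the Mittag-Leffler Condition if for every $N$ there is $k>N$ such that $g_N\circ\cdots\circ g_k(X_{k+1})=g_N\circ\cdots\circ g_i(X_{i+1})$ for all $i\ge k$. *)

From Stdlib Require Import Reals.
Open Scope R_scope.

Section Defs.
Context {X : Type}.

Definition is_metric (d : X -> X -> R) : Prop :=
  (forall x y, 0 <= d x y) /\
  (forall x y, d x y = 0 <-> x = y) /\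
  (forall x y, d x y = d y x) /\
  (forall x y z, d x z <= d x y + d y z).

(** Separable (with a countable dense sequence; this also gives nonemptiness). *)
Definition separable (d : X -> X -> R) : Prop :=
  exists s : nat -> X, forall x eps, 0 < eps -> exists n, d x (s n) < eps.

Definition open (d : X -> X -> R) (U : X -> Prop) : Prop :=
  forall x, U x -> exists r, 0 < r /\ forall y, d x y < r -> U y.

Definition clopen (d : X -> X -> R) (U : X -> Prop) : Prop :=
  open d U /\ open d (fun x => ~ U x).

Definition continuous (d : X -> X -> R) (f : X -> X) : Prop :=
  forall x eps, 0 < eps ->
    exists delta, 0 < delta /\ forall y, d x y < delta -> d (f x) (f y) < eps.

Definition uniformly_continuous (d : X -> X -> R) (f : X -> X) : Prop :=
  forall eps, 0 < eps ->
    exists delta, 0 < delta /\ forall x y, d x y < delta -> d (f x) (f y) < eps.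

Definition subset (U V : X -> Prop) : Prop := forall x, U x -> V x.

(** A partition: a cover by pairwise disjoint nonempty clopen sets.
    A family of sets is represented as a predicate on sets. *)
Definition partition (d : X -> X -> R) (P : (X -> Prop) -> Prop) : Prop :=
  (forall U, P U -> exists x, U x) /\
  (forall U, P U -> clopen d U) /\
  (forall U V, P U -> P V -> U <> V -> forall x, U x -> V x -> False) /\
  (forall x, exists U, P U /\ U x).

Definition refines (P Q : (X -> Prop) -> Prop) : Prop :=
  forall U, P U -> exists V, Q V /\ subset U V.

Definition defining_sequence (d : X -> X -> R) (A : nat -> (X -> Prop) -> Prop) : Prop :=
  (forall n, partition d (A n)) /\
  (forall n, refines (A (S n)) (A n)) /\
  (forall W x, open d W -> W x -> exists n U, A n U /\ U x /\ subset U W).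

Definition complete_defseq (A : nat -> (X -> Prop) -> Prop) : Prop :=
  forall U : nat -> (X -> Prop),
    (forall n, A n (U n)) -> (forall n, subset (U (S n)) (U n)) ->
    exists x, forall n, U n x.

Definition tame (d : X -> X -> R) (A : nat -> (X -> Prop) -> Prop) : Prop :=
  (forall eps, 0 < eps -> exists N, forall n, (N <= n)%nat ->
      forall U, A n U -> forall x y, U x -> U y -> d x y <= eps) /\
  (forall n, exists rho, 0 < rho /\
      forall U V, A n U -> A n V -> U <> V ->
        forall x y, U x -> V y -> rho <= d x y).

Definition tame_defining_sequence d A := defining_sequence d A /\ tame d A.

Definition finite_pseudo_orbit (d : X -> X -> R) (f : X -> X) (delta : R)
  (m : nat) (x : nat -> X) : Prop :=
  forall i, (i < m)%nat -> d (f (x i)) (x (S i)) < delta.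

Definition finite_shadowed (d : X -> X -> R) (f : X -> X) (eps : R)
  (m : nat) (x : nat -> X) (z : X) : Prop :=
  forall i, (i <= m)%nat -> d (Nat.iter i f z) (x i) < eps.

Definition pseudo_orbit (d : X -> X -> R) (f : X -> X) (delta : R) (x : nat -> X) : Prop :=
  forall i, d (f (x i)) (x (S i)) < delta.

Definition shadowed (d : X -> X -> R) (f : X -> X) (eps : R) (x : nat -> X) (z : X) : Prop :=
  forall i, d (Nat.iter i f z) (x i) < eps.

Definition finite_shadowing (d : X -> X -> R) (f : X -> X) : Prop :=
  forall eps, 0 < eps -> exists delta, 0 < delta /\
    forall m x, finite_pseudo_orbit d f delta m x ->
      exists z, finite_shadowed d f eps m x z.

Definition shadowing (d : X -> X -> R) (f : X -> X) : Prop :=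
  forall eps, 0 < eps -> exists delta, 0 < delta /\
    forall x, pseudo_orbit d f delta x -> exists z, shadowed d f eps x z.

Definition PO (f : X -> X) (P : (X -> Prop) -> Prop) (O : nat -> (X -> Prop)) : Prop :=
  (forall i, P (O i)) /\ (forall i, exists x, O i x /\ O (S i) (f x)).

(** Image of PO(U_{k}) in PO(U_N) under the composite of the bonding maps
    (for k >= N): (V_i) is the image of (O_i) iff O_i is contained in V_i for all i
    (the element of the partition U_N containing O_i is unique). *)
Definition PO_image (f : X -> X) (A : nat -> (X -> Prop) -> Prop) (N k : nat)
  (V : nat -> (X -> Prop)) : Prop :=
  PO f (A N) V /\ exists O, PO f (A k) O /\ forall i, subset (O i) (V i).

(** Mittag-Leffler condition for the inverse system (hookrightarrow, PO(U_n)),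
    with bonding maps g_m : PO(U_{m+1}) -> PO(U_m):
    for every N there is k > N with g_N o ... o g_k (PO(U_{k+1}))
    = g_N o ... o g_i (PO(U_{i+1})) for all i >= k. *)
Definition mittag_leffler_PO (f : X -> X) (A : nat -> (X -> Prop) -> Prop) : Prop :=
  forall N, exists k, (N < k)%nat /\
    forall i, (k <= i)%nat ->
      forall V, PO_image f A N (S k) V <-> PO_image f A N (S i) V.

End Defs.

(* (i) Extending a finite pseudo-orbit by a true orbit gives an infinite one, so shadowing
   implies finite shadowing.  For Mittag-Leffler at level N, let delta be given by shadowing
   for the separation constant rho_N of U_N, and take k so deep that the cells of U_(k+1)
   have diameter < delta: a chain in PO(U_(k+1)) then carries a delta-pseudo-orbit, which is
   rho_N-shadowed by an orbit, and the cells at any finer level along that orbit form a chain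
   with the same image in PO(U_N).
   (ii) A rho-pseudo-orbit, rho the separation constant of U_(k+1), gives a chain in
   PO(U_(k+1)).  Mittag-Leffler lets one refine its image in PO(U_N) to a thread of chains in
   the stable images at all deeper levels; completeness gives a point z in the nested initial
   cells of the thread, and continuity together with separation shows that the orbit of z runs
   through every chain of the thread, so it shadows the pseudo-orbit up to the mesh of U_N. *)

From Stdlib Require Import Reals Lra Lia Classical ClassicalEpsilon.
From Stdlib Require Import FunctionalExtensionality PropExtensionality.
Open Scope R_scope.

Lemma nested_le {T : Type} (C : nat -> T -> Prop) :
  (forall m, subset (C (S m)) (C m)) ->
  forall m m', (m <= m')%nat -> subset (C m') (C m).
Proof.
  intros HC m m' Hle. induction Hle as [|m' _ IH]; intros x Hx; [exact Hx | apply IH, HC, Hx].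
Qed.

Lemma dependent_choice_thread {T : Type} (E : nat -> T -> Prop) (Rel : T -> T -> Prop) (v0 : T) :
  E 0%nat v0 -> (forall n v, E n v -> exists v', E (S n) v' /\ Rel v' v) ->
  exists w : nat -> T, w 0%nat = v0 /\ forall m, E m (w m) /\ Rel (w (S m)) (w m).
Proof.
  intros H0 Hstep.
  destruct (choice (fun nv v' => E (fst nv) (snd nv) -> E (S (fst nv)) v' /\ Rel v' (snd nv)))
    as [g Hg].
  { intros [n v]. destruct (classic (E n v)) as [Hv|Hv].
    - destruct (Hstep n v Hv) as [v' Hv']. exists v'; auto.
    - exists v; intro; contradiction. }
  set (w := fix w m := match m with 0%nat => v0 | S m => g (m, w m) end).
  assert (Hw : forall m, E m (w m)).
  { induction m as [|m IH]; [exact H0|]. exact (proj1 (Hg (m, w m) IH)). }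
  exists w; split; [reflexivity|]. intro m; split; [apply Hw|].
  exact (proj2 (Hg (m, w m) (Hw m))).
Qed.

Definition separated {X : Type} (d : X -> X -> R) (P : (X -> Prop) -> Prop) (rho : R) : Prop :=
  forall U V, P U -> P V -> U <> V -> forall x y, U x -> V y -> rho <= d x y.

Definition mesh_le {X : Type} (d : X -> X -> R) (P : (X -> Prop) -> Prop) (eps : R) : Prop :=
  forall U, P U -> forall x y, U x -> U y -> d x y <= eps.

(* The union of the cells of P meeting S: the cell of P containing S whenever S lies in
   one, obtained without choosing a point of S. *)
Definition cell_over {X : Type} (P : (X -> Prop) -> Prop) (S : X -> Prop) : X -> Prop :=
  fun y => exists T, P T /\ (exists q, T q /\ S q) /\ T y.

Definition point_cell {X : Type} (P : (X -> Prop) -> Prop) (x : X) : X -> Prop :=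
  cell_over P (fun q => q = x).

Section Partition.

Context {X : Type} (d : X -> X -> R) (P : (X -> Prop) -> Prop).
Hypothesis HP : partition d P.

Lemma partition_cell_unique U V x : P U -> P V -> U x -> V x -> U = V.
Proof.
  destruct HP as [_ [_ [Hdisj _]]]. intros HU HV HUx HVx.
  destruct (classic (U = V)) as [E|E]; [exact E|].
  exfalso; exact (Hdisj U V HU HV E x HUx HVx).
Qed.

Lemma cell_over_eq T (S : X -> Prop) :
  P T -> subset S T -> (exists q, S q) -> cell_over P S = T.
Proof.
  intros HT HST [q Hq]. apply functional_extensionality; intro y.
  apply propositional_extensionality. split.
  - intros [T' [HT' [[q' [HTq' HSq']] HT'y]]].
    rewrite <- (partition_cell_unique T' T q'); auto.
  - intro HTy. exists T; split; [exact HT|]. split; [exists q; auto | exact HTy].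
Qed.

Lemma point_cell_eq T x : P T -> T x -> point_cell P x = T.
Proof.
  intros HT HTx.
  apply cell_over_eq; [exact HT | intros q ->; exact HTx | exists x; reflexivity].
Qed.

Lemma point_cell_spec x : P (point_cell P x) /\ point_cell P x x.
Proof.
  destruct (proj2 (proj2 (proj2 HP)) x) as [T [HT HTx]].
  rewrite (point_cell_eq T x HT HTx). auto.
Qed.

Lemma separated_cell_mem rho V x y :
  separated d P rho -> P V -> V y -> d x y < rho -> V x.
Proof.
  intros Hsep HV HVy Hxy. destruct (point_cell_spec x) as [HU HUx].
  destruct (classic (point_cell P x = V)) as [E|E].
  - rewrite <- E; exact HUx.
  - exfalso. pose proof (Hsep _ _ HU HV E x y HUx HVy). lra.
Qed.

Lemma pseudo_orbit_PO f rho x :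
  separated d P rho -> pseudo_orbit d f rho x -> PO f P (fun j => point_cell P (x j)).
Proof.
  intros Hsep Hx. split; [intro j; apply point_cell_spec|].
  intro j. exists (x j). split; [apply point_cell_spec|].
  apply (separated_cell_mem rho _ _ (x (S j))); [exact Hsep | apply point_cell_spec.. | apply Hx].
Qed.

End Partition.

Lemma PO_pseudo_orbit {X : Type} (d : X -> X -> R) (P : (X -> Prop) -> Prop) f O eps delta :
  mesh_le d P eps -> eps < delta -> PO f P O ->
  exists x, (forall j, O j (x j)) /\ pseudo_orbit d f delta x.
Proof.
  intros Hmesh Hlt [HOP HOf].
  destruct (choice (fun j x => O j x /\ O (S j) (f x)) HOf) as [x Hx].
  exists x; split; [intro j; apply Hx|].
  intro j. pose proof (Hmesh _ (HOP (S j)) _ _ (proj2 (Hx j)) (proj1 (Hx (S j)))). lra.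
Qed.

Section DefiningSequence.

Context {X : Type} (d : X -> X -> R) (A : nat -> (X -> Prop) -> Prop).
Hypothesis Hds : defining_sequence d A.

Let Hpart : forall n, partition d (A n) := proj1 Hds.

Lemma defseq_refines_le n m T : (n <= m)%nat -> A m T -> exists T', A n T' /\ subset T T'.
Proof.
  intro Hle. revert T. induction Hle as [|m _ IH]; intros T HT.
  - exists T; split; [exact HT | intros x Hx; exact Hx].
  - destruct (proj1 (proj2 Hds) m T HT) as [T1 [HT1 HTT1]].
    destruct (IH T1 HT1) as [T2 [HT2 HT1T2]].
    exists T2; split; [exact HT2 | intros x Hx; apply HT1T2, HTT1, Hx].
Qed.

Lemma defseq_cell_subset n m T V :
  (n <= m)%nat -> A m T -> A n V -> (exists q, T q /\ V q) -> subset T V.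
Proof.
  intros Hle HT HV [q [HTq HVq]].
  destruct (defseq_refines_le n m T Hle HT) as [T' [HT' HTT']].
  rewrite <- (partition_cell_unique d (A n) (Hpart n) T' V q); auto.
Qed.

Lemma cell_over_spec n m S :
  (n <= m)%nat -> A m S -> A n (cell_over (A n) S) /\ subset S (cell_over (A n) S).
Proof.
  intros Hle HS.
  destruct (defseq_refines_le n m S Hle HS) as [T [HT HST]].
  rewrite (cell_over_eq d (A n) (Hpart n) T S HT HST); [split; assumption|].
  exact (proj1 (Hpart m) S HS).
Qed.

Lemma PO_coarsen f n m O :
  (n <= m)%nat -> PO f (A m) O ->
  PO f (A n) (fun j => cell_over (A n) (O j)) /\ forall j, subset (O j) (cell_over (A n) (O j)).
Proof.
  intros Hle [HOA HOf].
  assert (Hc : forall j, A n (cell_over (A n) (O j)) /\ subset (O j) (cell_over (A n) (O j)))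
    by (intro j; exact (cell_over_spec n m (O j) Hle (HOA j))).
  split; [split|].
  - intro j; apply Hc.
  - intro j. destruct (HOf j) as [x [HOx HOfx]].
    exists x; split; [apply Hc, HOx | apply Hc, HOfx].
  - intro j; apply Hc.
Qed.

Lemma PO_image_antimono f N k i V :
  (N <= k)%nat -> (k <= i)%nat -> PO_image f A N i V -> PO_image f A N k V.
Proof.
  intros HNk Hki [HV [O [HO HOV]]]. split; [exact HV|].
  destruct (PO_coarsen f k i O Hki HO) as [HO' HOO'].
  exists (fun j => cell_over (A k) (O j)). split; [exact HO'|].
  intro j. apply (defseq_cell_subset N k); [exact HNk | apply HO' | apply HV|].
  destruct (proj1 (Hpart i) (O j) (proj1 HO j)) as [q Hq].
  exists q; split; [apply HOO', Hq | apply HOV, Hq].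
Qed.

End DefiningSequence.

Section Shadowing.

Context {X : Type} (d : X -> X -> R) (f : X -> X).
Hypothesis Hd : is_metric d.

Lemma metric_refl x : d x x = 0.
Proof. apply (proj1 (proj2 Hd)); reflexivity. Qed.

Lemma orbit_pseudo_orbit delta z :
  0 < delta -> pseudo_orbit d f delta (fun j => Nat.iter j f z).
Proof. intros Hdelta j; simpl; rewrite metric_refl; exact Hdelta. Qed.

Lemma shadowing_finite_shadowing : shadowing d f -> finite_shadowing d f.
Proof.
  intros Hsh eps Heps. destruct (Hsh eps Heps) as [delta [Hdelta Hshadow]].
  exists delta; split; [exact Hdelta|]. intros m x Hx.
  set (y := fun i => if Nat.leb i m then x i else Nat.iter (i - m) f (x m)).
  assert (Hy : pseudo_orbit d f delta y).
  { intro i. unfold y. destruct (Nat.leb_spec i m), (Nat.leb_spec (S i) m).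
    - apply Hx; lia.
    - replace i with m by lia. rewrite Nat.sub_succ_l, Nat.sub_diag by lia.
      simpl; rewrite metric_refl; exact Hdelta.
    - lia.
    - rewrite Nat.sub_succ_l by lia. simpl; rewrite metric_refl; exact Hdelta. }
  destruct (Hshadow y Hy) as [z Hz]. exists z. intros i Hi.
  specialize (Hz i). unfold y in Hz. destruct (Nat.leb_spec i m); [exact Hz | lia].
Qed.

Lemma shadowing_mittag_leffler A :
  tame_defining_sequence d A -> shadowing d f -> mittag_leffler_PO f A.
Proof.
  intros [Hds [Hmesh Hsep]] Hsh N.
  destruct (Hsep N) as [rho [Hrho HsepN]].
  destruct (Hsh rho Hrho) as [delta [Hdelta Hshadow]].
  destruct (Hmesh (delta / 2)) as [Nm HNm]; [lra|].
  exists (Nat.max (S N) Nm). split; [lia|]. intros i Hi V. split.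
  - intros [HV [O [HO HOV]]]. split; [exact HV|].
    assert (Hfine : mesh_le d (A (S (Nat.max (S N) Nm))) (delta / 2))
      by (unfold mesh_le; apply HNm; lia).
    destruct (PO_pseudo_orbit d _ f O (delta / 2) delta Hfine ltac:(lra) HO) as [x [HOx Hx]].
    destruct (Hshadow x Hx) as [z Hz].
    destruct (Hsep (S i)) as [rho' [Hrho' HsepSi]].
    exists (fun j => point_cell (A (S i)) (Nat.iter j f z)). split.
    + apply (pseudo_orbit_PO d _ (proj1 Hds (S i)) f rho' _ HsepSi).
      exact (orbit_pseudo_orbit rho' z Hrho').
    + intro j. destruct (point_cell_spec d _ (proj1 Hds (S i)) (Nat.iter j f z)) as [Hc Hcz].
      apply (defseq_cell_subset d A Hds N (S i)); [lia | exact Hc | apply HV|].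
      exists (Nat.iter j f z); split; [exact Hcz|].
      apply (separated_cell_mem d _ (proj1 Hds N) rho _ _ (x j) HsepN (proj1 HV j));
        [apply HOV, HOx | apply Hz].
  - apply (PO_image_antimono d A Hds f N); lia.
Qed.

End Shadowing.

Section MittagLeffler.

Context {X : Type} (d : X -> X -> R) (f : X -> X) (A : nat -> (X -> Prop) -> Prop).
Hypothesis Hds : defining_sequence d A.

Lemma complete_nested_point N (C : nat -> X -> Prop) :
  complete_defseq A -> (forall m, A (m + N) (C m)) -> (forall m, subset (C (S m)) (C m)) ->
  exists z, forall m, C m z.
Proof.
  intros Hcomp HCA HCS.
  set (U := fun n => cell_over (A n) (C (n - N)%nat)).
  assert (HU : forall n, A n (U n) /\ subset (C (n - N)%nat) (U n)).
  { intro n. apply (cell_over_spec d A Hds n (n - N + N)); [lia | apply HCA]. }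
  assert (HUS : forall n, subset (U (S n)) (U n)).
  { intro n. apply (defseq_cell_subset d A Hds n (S n)); [lia | apply HU | apply HU|].
    destruct (proj1 (proj1 Hds _) _ (HCA (S n - N)%nat)) as [q Hq].
    exists q; split; [apply HU, Hq|].
    apply HU, (nested_le C HCS (n - N) (S n - N)); [lia | exact Hq]. }
  destruct (Hcomp U (fun n => proj1 (HU n)) HUS) as [z Hz].
  exists z. intro m. specialize (Hz (m + N)%nat). unfold U in Hz.
  rewrite Nat.add_sub, (cell_over_eq d _ (proj1 Hds _) (C m)) in Hz; [exact Hz | apply HCA | ..].
  - intros x Hx; exact Hx.
  - exact (proj1 (proj1 Hds _) _ (HCA m)).
Qed.

Lemma thread_orbit N (W : nat -> nat -> X -> Prop) z :
  tame d A -> continuous d f ->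
  (forall m, PO f (A (m + N)) (W m)) -> (forall m j, subset (W (S m) j) (W m j)) ->
  (forall m, W m 0%nat z) -> forall j m, W m j (Nat.iter j f z).
Proof.
  intros [Hmesh Hsep] Hf HW HWS HWz j. induction j as [|j IH]; [exact HWz|]. intro m.
  set (y := Nat.iter j f z).
  destruct (Hsep (m + N)%nat) as [r [Hr Hsepm]].
  destruct (Hf y r Hr) as [eta [Heta Hcont]].
  destruct (Hmesh (eta / 2)) as [Nm HNm]; [lra|].
  set (M := Nat.max m Nm).
  destruct (proj2 (HW M) j) as [a [Ha Hfa]].
  assert (Hya : d y a <= eta / 2)
    by exact (HNm (M + N)%nat ltac:(lia) _ (proj1 (HW M) j) y a (IH M) Ha).
  apply (separated_cell_mem d _ (proj1 Hds _) r _ _ (f a) Hsepm (proj1 (HW m) (S j))).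
  - apply (nested_le (fun m => W m (S j)) (fun m => HWS m (S j)) m M); [lia | exact Hfa].
  - apply Hcont; lra.
Qed.

Section StableImages.

(* [k n] is a Mittag-Leffler index for level [n]: the stable image in PO(U_n) is the image
   from level [S (k n)]. *)
Variable k : nat -> nat.
Hypothesis Hk : forall n, (n < k n)%nat /\ forall i, (k n <= i)%nat ->
  forall V, PO_image f A n (S (k n)) V <-> PO_image f A n (S i) V.

Lemma stable_image_extend n V :
  PO_image f A n (S (k n)) V ->
  exists V', PO_image f A (S n) (S (k (S n))) V' /\ forall j, subset (V' j) (V j).
Proof.
  intro HV. set (i := Nat.max (k n) (k (S n))).
  assert (Hni : (k n <= i)%nat) by apply Nat.le_max_l.
  assert (HSni : (k (S n) <= i)%nat) by apply Nat.le_max_r.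
  pose proof (proj1 (Hk n)) as Hnk.
  destruct (proj1 (proj2 (Hk n) i Hni V) HV) as [HVPO [O [HO HOV]]].
  destruct (PO_coarsen d A Hds f (S n) (S i) O ltac:(lia) HO) as [HO' HOO'].
  exists (fun j => cell_over (A (S n)) (O j)). split.
  - apply (proj2 (Hk (S n)) i HSni). split; [exact HO'|]. exists O; split; [exact HO | exact HOO'].
  - intro j. apply (defseq_cell_subset d A Hds n (S n)); [lia | apply HO' | apply HVPO|].
    destruct (proj1 (proj1 Hds _) (O j) (proj1 HO j)) as [q Hq].
    exists q; split; [apply HOO', Hq | apply HOV, Hq].
Qed.

End StableImages.

Lemma mittag_leffler_shadowing :
  tame d A -> complete_defseq A -> continuous d f -> mittag_leffler_PO f A -> shadowing d f.
Proof.
  intros Htame Hcomp Hf Hml.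
  destruct (choice _ Hml) as [k Hk].
  intros eps Heps.
  destruct (proj1 Htame (eps / 2)) as [N HN]; [lra|].
  destruct (proj2 Htame (S (k N))) as [rho [Hrho Hsep]].
  exists rho; split; [exact Hrho|]. intros x Hx.
  pose proof (pseudo_orbit_PO d _ (proj1 Hds _) f rho x Hsep Hx) as HO.
  destruct (PO_coarsen d A Hds f N (S (k N)) _ ltac:(pose proof (proj1 (Hk N)); lia) HO)
    as [HV0 HOV0].
  set (V0 := fun j => cell_over (A N) (point_cell (A (S (k N))) (x j))).
  destruct (dependent_choice_thread (fun m V => PO_image f A (m + N)%nat (S (k (m + N)%nat)) V)
    (fun V' V => forall j, subset (V' j) (V j)) V0) as [W [HW0 HW]].
  { split; [exact HV0|]. exists (fun j => point_cell (A (S (k N))) (x j)); split; assumption. }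
  { intros n V. apply stable_image_extend, Hk. }
  assert (HWPO : forall m, PO f (A (m + N)) (W m)) by (intro m; apply (proj1 (HW m))).
  destruct (complete_nested_point N (fun m => W m 0%nat) Hcomp (fun m => proj1 (HWPO m) 0%nat)
    (fun m => proj2 (HW m) 0%nat)) as [z Hz].
  exists z. intro j.
  pose proof (thread_orbit N W z Htame Hf HWPO (fun m => proj2 (HW m)) Hz j 0%nat) as Hzj.
  assert (Hxj : W 0%nat j (x j)).
  { rewrite HW0. apply HOV0, (point_cell_spec d _ (proj1 Hds _)). }
  pose proof (HN N (le_n N) _ (proj1 (HWPO 0%nat) j) _ _ Hzj Hxj). lra.
Qed.

End MittagLeffler.

Theorem theorem4p16 (X : Type) (d : X -> X -> R) (f : X -> X)
  (A : nat -> (X -> Prop) -> Prop) :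
  is_metric d -> separable d -> continuous d f -> tame_defining_sequence d A ->
  (shadowing d f -> finite_shadowing d f /\ mittag_leffler_PO f A) /\
  (complete_defseq A -> uniformly_continuous d f ->
     finite_shadowing d f -> mittag_leffler_PO f A -> shadowing d f).
Proof.
  intros Hd _ Hf [Hds Htame]. split.
  - intro Hsh. split.
    + exact (shadowing_finite_shadowing d f Hd Hsh).
    + exact (shadowing_mittag_leffler d f Hd A (conj Hds Htame) Hsh).
  - intros Hcomp _ _ Hml. exact (mittag_leffler_shadowing d f A Hds Htame Hcomp Hf Hml).
Qed.
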